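(* The process $(X_t)_t$ belongs to the class $\mathcal{G}$ if and only if for each $t$ there exists a random variable $Z_t$ in ${\cal V}_N$ such that $p_{t-1\to t}(\bm{x},\bm{y}):= \mathbb{P}\big (X_t=\bm{y}\mid X_{t-1}=\bm{x}\big )$ can be expanded as \[ p_{t-1\to t}(\bm{x},\bm{y}) = \varphi^{\|\bm{y}\|}(1-\varphi)^{N-\|\bm{y}\|}\Bigg \{ 1 + \sum_{A\subseteq [N], A\ne \emptyset}\kappa_{t,A}\prod_{k \in A} \Big (1 - \frac{\bm{y}[k]}{\varphi}\Big )\Big (1 - \frac{\bm{x}[k]}{\gamma}\Big )\Bigg \}, \] where \[ \kappa_{t,A}= \Big (\frac{\alpha}{1-\alpha}\Big )^{|A|}\mathbb{E}\Big [ \prod_{k \in A}\Big (1 - \frac{Z_t[k]}{\alpha}\Big ) \Big ] = (-1)^{|A|}\mathbb{E}\Big [\Big (-\frac{\alpha}{1-\alpha}\Big )^{\sum_{k\in A}(1-Z_t[k])}\Big ], \] with $\alpha=\min\{\varphi,\gamma\}$.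
   Context: Let ${\cal V}_N=\{0,1\}^N$ be the vertices of the $N$-dimensional hypercube, $[N]=\{1,\dots,N\}$, and for $\bm{x}\in{\cal V}_N$ let $\|\bm{x}\|$ denote the number of coordinates equal to one. $(X_t)_t$ is a (possibly time-inhomogeneous) Markov process on ${\cal V}_N$, and $\varphi,\gamma\in(0,1)$ are parameters with $\varphi+\gamma\geq 1$ (achievable without loss of generality by swapping the roles of $0$ and $1$). The process is said to belong to the class $\mathcal{G}$ if it satisfies the following two conditions. Condition 1: For each $t\in\mathbb{N}$, $X_t$ has the product measure of $N$ Bernoulli$(\varphi)$ coordinates whenever $X_{t-1}$ has the product measure of $N$ Bernoulli$(\gamma)$ coordinates, and the following form of reversibility holds: \[ \gamma^{\|\bm{x}\|}(1-\gamma)^{N-\|\bm{x}\|}\mathbb{P}\big (X_t=\bm{y}\mid X_{t-1}=\bm{x};\varphi,\gamma\big )= \varphi^{\|\bm{y}\|}(1-\varphi)^{N-\|\bm{y}\|} \mathbb{P}\big (X_t=\bm{x}\mid X_{t-1}=\bm{y};\gamma,\varphi\big ), \] where the parameters $\varphi,\gamma$ are interchanged on the right-hand side (i.e. the right side is the transition probability of the model with the roles of $\varphi$ and $\gamma$ swapped); when $\varphi=\gamma$ this is ordinary reversibility. Condition 2 (local change): For $B\subseteq[N]$ and $\bm{y}\in{\cal V}_N$ let $\bm{y}(B)=(\bm{y}[j], j\in B)$. For each $t\in\mathbb{N}$, all $B\subseteq [N]$ and all $C\subseteq\{0,1\}^B$, \[ \mathbb{P}(X_t(B)\in C\mid X_{t-1})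 = \mathbb{P}(X_t(B)\in C\mid X_{t-1}(B)). \] *)

From HB Require Import structures.
From mathcomp Require Import all_boot all_order all_algebra.
Set Implicit Arguments. Unset Strict Implicit. Unset Printing Implicit Defensive.
Import Order.TTheory GRing.Theory Num.Theory.
Local Open Scope ring_scope.

Definition vert (N : nat) := {ffun 'I_N -> bool}.

Definition hnorm (N : nat) (x : vert N) : nat := #|[set i | x i]|.

Definition bern (R : realFieldType) (N : nat) (p : R) (x : vert N) : R :=
  p ^+ hnorm x * (1 - p) ^+ (N - hnorm x).

(* A transition kernel on V_N : K x y = P(X_t = y | X_{t-1} = x). *)
Definition kernel (R : realFieldType) (N : nat) := vert N -> vert N -> R.

Definition stochastic (R : realFieldType) (N : nat) (K : kernel R N) : Prop :=
  (forall x y, 0 <= K x y) /\ (forall x, \sum_(y : vert N) K x y = 1).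

(* X_{t-1} ~ Bern(g)^N  implies  X_t ~ Bern(f)^N *)
Definition maps_bern (R : realFieldType) (N : nat) (K : kernel R N) (f g : R) : Prop :=
  forall y : vert N, \sum_(x : vert N) bern g x * K x y = bern f y.

(* y(B), encoded as the vector equal to y on B and 0 outside B *)
Definition restr (N : nat) (B : {set 'I_N}) (y : vert N) : vert N :=
  [ffun i => if i \in B then y i else false].

(* Condition 2 (local change): P(X_t(B) \in C | X_{t-1}) depends on X_{t-1} only
   through X_{t-1}(B). *)
Definition local_change (R : realFieldType) (N : nat) (K : kernel R N) : Prop :=
  forall (B : {set 'I_N}) (C : {set vert N}) (x x' : vert N),
    restr B x = restr B x' ->
    \sum_(y : vert N | restr B y \in C) K x y =
    \sum_(y : vert N | restr B y \in C) K x' y.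

(* A (time-inhomogeneous) Markov model on V_N depending on the parameters:
   model f g t x y = P(X_t = y | X_{t-1} = x ; f, g), for t >= 1. *)
Definition model (R : realFieldType) (N : nat) := R -> R -> nat -> kernel R N.

(* The model with parameters interchanged,
   mdl gamma phi, is the one appearing on the right-hand side of the reversibility
   condition; it is itself a Markov process satisfying the local change condition. *)
Definition classG (R : realFieldType) (N : nat) (mdl : model R N) (phi gam : R) : Prop :=
  forall t : nat, (0 < t)%N ->
    [/\ stochastic (mdl phi gam t) /\ stochastic (mdl gam phi t),
        maps_bern (mdl phi gam t) phi gam,
        (forall x y : vert N,
           bern gam x * mdl phi gam t x y = bern phi y * mdl gam phi t y x),
        local_change (mdl phi gam t) & local_change (mdl gam phi t)].

Definition distribution (R : realFieldType) (N : nat) (mu : vert N -> R) : Prop :=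
  (forall z, 0 <= mu z) /\ \sum_(z : vert N) mu z = 1.

Definition kappa (R : realFieldType) (N : nat) (a : R) (mu : vert N -> R)
    (A : {set 'I_N}) : R :=
  (a / (1 - a)) ^+ #|A| *
  \sum_(z : vert N) mu z * \prod_(k in A) (1 - ((z k)%:R) / a).

Definition expansion (R : realFieldType) (N : nat) (K : kernel R N) (f g a : R)
    (mu : vert N -> R) : Prop :=
  forall x y : vert N,
    K x y = bern f y *
      (1 + \sum_(A : {set 'I_N} | A != set0)
             kappa a mu A *
             \prod_(k in A) ((1 - ((y k)%:R) / f) * (1 - ((x k)%:R) / g))).

From HB Require Import structures.
From mathcomp Require Import all_boot all_order all_algebra.
From mathcomp Require Import ring lra.
Set Implicit Arguments. Unset Strict Implicit. Unset Printing Implicit Defensive.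
Import Order.TTheory GRing.Theory Num.Theory.
Local Open Scope ring_scope.

(* Write [K x y / bern phi y] in the orthogonal basis of biased Walsh products
   [prod_(k in A) (1 - y_k / phi)] for the weight [bern phi].  Local change makes the
   [A]-coefficient a function of [x(A)] alone; reversibility turns its inner product
   with [prod_(k in B) (1 - x_k / gam)], [B] not contained in [A], into one where
   local change of the reversed kernel applies.  So only [B = A] survives and the
   coefficient is [c_A * prod_(k in A) (1 - x_k / gam)], with [c_A] read off at
   [x = 0]: it is a Walsh moment of [Z = X_t] started from [0], with [alpha = phi]
   when [phi <= gam] (swap the roles of [phi] and [gam] otherwise).
   Conversely the expansion is a mixture over [Z] of product kernels whose
   one-coordinate factors are stochastic, map [Bern gam] to [Bern phi], and are
   nonnegative because [alpha <= min phi gam] and [phi + gam >= 1]. *)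

Lemma sum_set_prod (R : comPzSemiRingType) (I : finType) (f : I -> R) :
  \sum_(A : {set I}) \prod_(k in A) f k = \prod_k (f k + 1).
Proof.
rewrite bigA_distr; apply: eq_bigr => A _; rewrite big_mkcond /=.
by apply: eq_bigr => i _.
Qed.

Section Cube.
Variables (R : realFieldType) (N : nat).
Implicit Types (p q : R) (x y z v : vert N) (A B : {set 'I_N}).

Definition vert0 : vert N := [ffun => false].

Definition bernb p (b : bool) : R := if b then p else 1 - p.

Definition walsh p (b : bool) : R := 1 - b%:R / p.

Definition walshA p A x : R := \prod_(k in A) walsh p (x k).

Lemma vert_neq x z : x != z -> exists k, x k != z k.
Proof.
move=> neq; apply/existsP; apply: contraNT neq => /existsPn eq_xz.
by apply/eqP/ffunP => k; apply/eqP; rewrite -[_ == _]negbK eq_xz.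
Qed.

Lemma bernE p x : bern p x = \prod_k bernb p (x k).
Proof.
rewrite /bern /hnorm [RHS](bigID (fun k => x k)) /=.
rewrite [X in _ = X * _](eq_bigr (fun _ => p)); last by move=> k; rewrite /bernb => ->.
rewrite [X in _ = _ * X](eq_bigr (fun _ => 1 - p)); last first.
  by move=> k /negbTE; rewrite /bernb => ->.
rewrite !prodr_const; congr (_ ^+ _ * _ ^+ _); first by apply: eq_card => k; rewrite inE.
rewrite -[N in (N - _)%N](card_ord N) -(cardsC [set i | x i]) addKn.
by apply: eq_card => k; rewrite !inE.
Qed.

Lemma bern_neq0 p x : 0 < p < 1 -> bern p x != 0.
Proof.
move=> /andP[p_gt0 p_lt1]; rewrite bernE; apply/prodf_neq0 => k _.
by rewrite /bernb; case: (x k); [exact: lt0r_neq0 | rewrite subr_eq0 eq_sym lt_eqF].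
Qed.

Lemma walsh_true p : walsh p true = 1 - p^-1.
Proof. by rewrite /walsh mul1r. Qed.

Lemma walsh_false p : walsh p false = 1.
Proof. by rewrite /walsh mul0r subr0. Qed.

Lemma sum_bernb_walsh p : p != 0 -> \sum_(b : bool) bernb p b * walsh p b = 0.
Proof. by move=> p_neq0; rewrite big_bool /= walsh_true walsh_false; field. Qed.

Lemma walsh_delta p (a b : bool) : 0 < p < 1 ->
  p / (1 - p) * walsh p a * walsh p b + 1 = if a == b then (bernb p a)^-1 else 0.
Proof.
move=> /andP[p_gt0 p_lt1].
have p_neq0 : p != 0 by rewrite gt_eqF.
have q_neq0 : 1 - p != 0 by rewrite subr_eq0 eq_sym lt_eqF.
by case: a; case: b; rewrite /bernb /= ?walsh_true ?walsh_false; field; rewrite ?p_neq0 ?q_neq0.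
Qed.

Lemma walshA_set0 p x : walshA p set0 x = 1.
Proof. exact: big_set0. Qed.

Lemma walshA_vert0 p A : walshA p A vert0 = 1.
Proof. by apply: big1 => k _; rewrite ffunE walsh_false. Qed.

Lemma walshA_orth p x z : 0 < p < 1 ->
  \sum_(A : {set 'I_N}) (p / (1 - p)) ^+ #|A| * walshA p A x * walshA p A z =
  if x == z then (bern p x)^-1 else 0.
Proof.
move=> p01.
under eq_bigr => A _ do rewrite /walshA -prodr_const -!big_split /=.
rewrite sum_set_prod; under eq_bigr => k _ do rewrite walsh_delta //.
case: eqP => [<- | /eqP /vert_neq [k xz_k]].
  by rewrite bernE -prodfV; apply: eq_bigr => k _; rewrite eqxx.
by rewrite (bigD1 k) //= (negbTE xz_k) mul0r.
Qed.

(* The [walshA p A] are orthogonal for the weight [bern p], and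
   [(p / (1 - p)) ^+ #|A|] is the inverse of the squared norm of [walshA p A]. *)
Lemma walsh_inversion p (h : vert N -> R) x : 0 < p < 1 ->
  h x = \sum_(A : {set 'I_N}) (p / (1 - p)) ^+ #|A| * walshA p A x *
          \sum_z bern p z * walshA p A z * h z.
Proof.
move=> p01.
transitivity (\sum_z bern p z * h z *
   \sum_(A : {set 'I_N}) (p / (1 - p)) ^+ #|A| * walshA p A x * walshA p A z).
  rewrite (bigD1 x) //= walshA_orth // eqxx big1 => [|z zx]; last first.
    by rewrite walshA_orth // eq_sym (negbTE zx) mulr0.
  by rewrite addr0 mulrAC mulfV ?mul1r // bern_neq0.
under eq_bigr => z _ do rewrite big_distrr /=.
rewrite exchange_big /=; apply: eq_bigr => A _.
by rewrite big_distrr /=; apply: eq_bigr => z _; ring.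
Qed.

Lemma restr_idem B x : restr B (restr B x) = restr B x.
Proof. by apply/ffunP => k; rewrite !ffunE; case: (k \in B). Qed.

Lemma natr_restr_eq B v y :
  ((restr B y == v)%:R : R) =
  \prod_k (((if k \in B then y k else false) == v k)%:R : R).
Proof.
case: eqP => [<- | /eqP /vert_neq [k]]; first by rewrite big1 // => k _; rewrite ffunE eqxx.
by rewrite ffunE => neq_k; rewrite (bigD1 k) //= (negbTE neq_k) mul0r.
Qed.

Lemma sum_restr_eq_prod B v (G : 'I_N -> bool -> R) :
  \sum_(y | restr B y == v) \prod_k G k (y k) =
  \prod_k \sum_(b : bool) (((if k \in B then b else false) == v k)%:R * G k b).
Proof.
rewrite bigA_distr_bigA /= big_mkcond /=; apply: eq_bigr => y _.
by rewrite big_split /= -natr_restr_eq; case: eqP; rewrite ?mul1r ?mul0r.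
Qed.

Lemma sum_restr_partition A (F H : vert N -> R) :
  \sum_y F y * H (restr A y) =
  \sum_v H v * \sum_(y | restr A y \in [set v]) F y.
Proof.
rewrite (partition_big (restr A) predT) //=; apply: eq_bigr => v _.
rewrite big_distrr /=; apply: eq_big => [y | y /eqP ->]; first by rewrite in_set1.
by rewrite mulrC.
Qed.

Lemma walshA_restr p A y : walshA p A y = walshA p A (restr A y).
Proof. by apply: eq_bigr => k kA; rewrite ffunE kA. Qed.

Lemma walshA_orth_restr q A A' (F : vert N -> R) k :
  q != 0 -> k \in A' -> k \notin A -> (forall x, F x = F (restr A x)) ->
  \sum_x bern q x * walshA q A' x * F x = 0.
Proof.
move=> q_neq0 kA' kNA F_restr.
under eq_bigr => x _ do rewrite F_restr.
rewrite sum_restr_partition big1 // => v _.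
under eq_bigl => x do rewrite in_set1.
under eq_bigr => x _ do rewrite bernE /walshA [X in _ * X]big_mkcond -big_split /=.
rewrite (sum_restr_eq_prod A v (fun k b => bernb q b * (if k \in A' then walsh q b else 1))).
rewrite (bigD1 k) //= (negbTE kNA) kA' -big_distrr /= sum_bernb_walsh //.
by rewrite mulr0 !mul0r mulr0.
Qed.

Definition walsh_coef (K : kernel R N) p A x : R := \sum_y K x y * walshA p A y.

Lemma walsh_coef_restr (K : kernel R N) p A x :
  local_change K -> walsh_coef K p A x = walsh_coef K p A (restr A x).
Proof.
move=> locK; rewrite /walsh_coef.
under eq_bigr => y _ do rewrite walshA_restr.
under [RHS]eq_bigr => y _ do rewrite walshA_restr.
rewrite !sum_restr_partition; apply: eq_bigr => v _; congr (_ * _).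
by apply: locK; rewrite restr_idem.
Qed.

Section Reversible.
Variables (K K' : kernel R N) (p g : R).
Hypotheses (p01 : 0 < p < 1) (g01 : 0 < g < 1).
Hypotheses (locK : local_change K) (locK' : local_change K').
Hypothesis revK : forall x y, bern g x * K x y = bern p y * K' y x.

(* For [B] not contained in [A] this is locality of [K]; otherwise reversibility
   moves the sum to the other side, where locality of [K'] applies. *)
Lemma walsh_coef_orth A B : B != A ->
  \sum_x bern g x * walshA g B x * walsh_coef K p A x = 0.
Proof.
move=> neqBA; have p_neq0 : p != 0 := lt0r_neq0 (andP p01).1.
have g_neq0 : g != 0 := lt0r_neq0 (andP g01).1.
have [subBA | /subsetPn [k kB kNA]] := boolP (B \subset A); last first.
  by apply: (walshA_orth_restr g_neq0 kB kNA) => x; apply: walsh_coef_restr.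
have /subsetPn [k kA kNB] : ~~ (A \subset B).
  by apply: contra neqBA => subAB; rewrite eqEsubset subBA subAB.
transitivity (\sum_y bern p y * walshA p A y * walsh_coef K' g B y); last first.
  by apply: (walshA_orth_restr p_neq0 kA kNB) => y; apply: walsh_coef_restr.
rewrite /walsh_coef; under eq_bigr => x _ do rewrite big_distrr /=.
rewrite exchange_big /=; apply: eq_bigr => y _.
rewrite big_distrr /=; apply: eq_bigr => x _.
transitivity (bern g x * K x y * (walshA g B x * walshA p A y)); first by ring.
by rewrite revK; ring.
Qed.

Lemma walsh_coefE A x : walsh_coef K p A x = walshA g A x * walsh_coef K p A vert0.
Proof.
have coefE x' : walsh_coef K p A x' = (g / (1 - g)) ^+ #|A| * walshA g A x' *
    \sum_z bern g z * walshA g A z * walsh_coef K p A z.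
  rewrite {1}(walsh_inversion (walsh_coef K p A) x' g01) (bigD1 A) //=.
  by rewrite [X in _ + X]big1 ?addr0 // => B neqBA; rewrite walsh_coef_orth ?mulr0.
by rewrite coefE [in RHS]coefE walshA_vert0 mulr1; ring.
Qed.

Lemma reversible_expansion : stochastic K -> expansion K p g p (K vert0).
Proof.
move=> [_ sumK1] x y.
have bern_y := bern_neq0 y p01.
rewrite -[LHS](divfK bern_y) mulrC (walsh_inversion (fun z => K x z / bern p z) y p01).
congr (_ * _); rewrite (bigD1 set0) //= cards0 expr0 !walshA_set0 !mul1r.
have coefE B : \sum_z bern p z * walshA p B z * (K x z / bern p z) =
               walshA g B x * walsh_coef K p B vert0.
  rewrite -walsh_coefE; apply: eq_bigr => z _.
  by move: (bern_neq0 z p01) => bern_z; field.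
have coef_set0 : walsh_coef K p set0 vert0 = 1.
  by rewrite -(sumK1 vert0); apply: eq_bigr => z _; rewrite walshA_set0 mulr1.
rewrite coefE walshA_set0 mul1r coef_set0; congr (_ + _); apply: eq_bigr => B _.
by rewrite coefE /kappa /walsh_coef big_split /= /walshA /walsh; ring.
Qed.

End Reversible.

Definition expansion_kernel f g a (mu : vert N -> R) : kernel R N := fun x y =>
  bern f y * (1 + \sum_(A : {set 'I_N} | A != set0)
                    kappa a mu A * \prod_(k in A) ((1 - (y k)%:R / f) * (1 - (x k)%:R / g))).

Lemma expansion_kernel_rev f g a mu x y :
  bern g x * expansion_kernel f g a mu x y = bern f y * expansion_kernel g f a mu y x.
Proof.
rewrite /expansion_kernel mulrCA; congr (_ * (_ * (1 + _))).
by apply: eq_bigr => A _; congr (_ * _); apply: eq_bigr => k _; rewrite mulrC.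
Qed.

Lemma expansion_rev (K K' : kernel R N) p g a mu :
  expansion K p g a mu -> expansion K' g p a mu ->
  forall x y, bern g x * K x y = bern p y * K' y x.
Proof. by move=> eK eK' x y; rewrite eK eK'; apply: expansion_kernel_rev. Qed.

Lemma expansion_swap (K K' : kernel R N) p g a mu : 0 < p < 1 ->
  (forall x y, bern g x * K x y = bern p y * K' y x) ->
  expansion K p g a mu -> expansion K' g p a mu.
Proof.
move=> p01 revK eK y x; apply: (mulfI (bern_neq0 y p01)).
by rewrite -revK eK; apply: expansion_kernel_rev.
Qed.

Definition prod_kernel (G : 'I_N -> bool -> bool -> R) : kernel R N :=
  fun x y => \prod_k G k (x k) (y k).

Section ProdKernel.
Variable G : 'I_N -> bool -> bool -> R.
Hypothesis G_sum1 : forall k b, \sum_(c : bool) G k b c = 1.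

Lemma prod_kernel_stochastic :
  (forall k b c, 0 <= G k b c) -> stochastic (prod_kernel G).
Proof.
move=> G_ge0; split=> [x y | x]; first exact: prodr_ge0.
by rewrite -(bigA_distr_bigA (fun k => G k (x k))) big1.
Qed.

Lemma prod_kernel_local : local_change (prod_kernel G).
Proof.
move=> B C x x' eq_x; rewrite /prod_kernel.
have sumE x0 : \sum_(y | restr B y \in C) \prod_k G k (x0 k) (y k) =
    \sum_(v | v \in C) \prod_k \sum_(b : bool)
       (((if k \in B then b else false) == v k)%:R * G k (x0 k) b).
  rewrite (partition_big (restr B) (mem C)) //=; apply: eq_bigr => v vC.
  rewrite -(sum_restr_eq_prod B v (fun k => G k (x0 k))); apply: eq_bigl => y.
  by case: (restr B y =P v) => [-> | _]; rewrite ?vC ?andbF.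
rewrite !sumE; apply: eq_bigr => v _; apply: eq_bigr => k _.
have [kB | kNB] := boolP (k \in B); last by rewrite -!big_distrr /= !G_sum1.
by have := congr1 (fun w : vert N => w k) eq_x; rewrite /= !ffunE kB => ->.
Qed.

End ProdKernel.

Lemma prod_kernel_maps_bern (G : 'I_N -> bool -> bool -> R) f g :
  (forall k c, \sum_(b : bool) bernb g b * G k b c = bernb f c) ->
  maps_bern (prod_kernel G) f g.
Proof.
move=> G_bern y; rewrite bernE -[RHS](eq_bigr _ (fun k _ => G_bern k (y k))).
rewrite (bigA_distr_bigA (fun k b => bernb g b * G k b (y k))).
by apply: eq_bigr => x _; rewrite bernE -big_split.
Qed.

Section Mixture.
Variables (I : finType) (mu : I -> R) (Kz : I -> kernel R N) (K : kernel R N).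
Hypothesis K_mix : forall x y, K x y = \sum_i mu i * Kz i x y.

Lemma mixture_stochastic : (forall i, 0 <= mu i) -> \sum_i mu i = 1 ->
  (forall i, stochastic (Kz i)) -> stochastic K.
Proof.
move=> mu_ge0 mu_sum1 Kz_st; split=> [x y | x].
  by rewrite K_mix; apply: sumr_ge0 => i _; rewrite mulr_ge0 // (Kz_st i).1.
under eq_bigr => y _ do rewrite K_mix.
rewrite exchange_big /= -[RHS]mu_sum1; apply: eq_bigr => i _.
by rewrite -big_distrr /= (Kz_st i).2 mulr1.
Qed.

Lemma mixture_maps_bern f g : \sum_i mu i = 1 ->
  (forall i, maps_bern (Kz i) f g) -> maps_bern K f g.
Proof.
move=> mu_sum1 Kz_bern y; under eq_bigr => x _ do rewrite K_mix big_distrr /=.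
rewrite exchange_big /= -[RHS]mul1r -mu_sum1 big_distrl /=; apply: eq_bigr => i _.
by rewrite -(Kz_bern i y) big_distrr /=; apply: eq_bigr => x _; rewrite mulrCA.
Qed.

Lemma mixture_local : (forall i, local_change (Kz i)) -> local_change K.
Proof.
move=> Kz_loc B C x x' eq_x.
under eq_bigr => y _ do rewrite K_mix.
under [RHS]eq_bigr => y _ do rewrite K_mix.
rewrite exchange_big [RHS]exchange_big; apply: eq_bigr => i _.
by rewrite -!big_distrr (Kz_loc i B C x x').
Qed.

End Mixture.

Definition kappa1 a (b : bool) : R := a / (1 - a) * walsh a b.

Lemma kappaE a mu A : kappa a mu A = \sum_z mu z * \prod_(k in A) kappa1 a (z k).
Proof.
rewrite /kappa big_distrr; apply: eq_bigr => z _.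
by rewrite /kappa1 big_split prodr_const /= /walsh mulrCA.
Qed.

(* The factor of coordinate [k] in the expansion kernel, given [Z[k] = b]. *)
Definition coord_kernel a p g (b xk yk : bool) : R :=
  bernb p yk * (1 + kappa1 a b * (walsh p yk * walsh g xk)).

Lemma coord_kernel_sum1 a p g b xk : p != 0 -> \sum_(yk : bool) coord_kernel a p g b xk yk = 1.
Proof. by move=> p_neq0; rewrite big_bool /coord_kernel /bernb /= walsh_true walsh_false; field. Qed.

Lemma coord_kernel_bern a p g b yk : g != 0 ->
  \sum_(xk : bool) bernb g xk * coord_kernel a p g b xk yk = bernb p yk.
Proof.
move=> g_neq0; rewrite big_bool /coord_kernel /bernb /= !walsh_true !walsh_false.
by case: yk; field.
Qed.

Lemma coord_kernel_ge0 a p g b xk yk : 0 < a -> a <= p -> a <= g -> p < 1 -> g < 1 ->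
  1 <= p + g -> 0 <= coord_kernel a p g b xk yk.
Proof.
move=> a_gt0 le_ap le_ag p_lt1 g_lt1 pg_ge1.
have g_gt0 : 0 < g := lt_le_trans a_gt0 le_ag.
have a_lt1 : a < 1 := le_lt_trans le_ap p_lt1.
(* Once denominators are cleared, every entry is a product of nonnegative factors. *)
have scaled : coord_kernel a p g b xk yk * (g * (1 - a)) =
    bernb p yk * g * (1 - a) + (a - b%:R) * (bernb p yk - yk%:R) * (g - xk%:R).
  have p_neq0 : p != 0 := lt0r_neq0 (lt_le_trans a_gt0 le_ap).
  have a1_neq0 : 1 - a != 0 by rewrite subr_eq0 gt_eqF.
  have [a_neq0 g_neq0] := (lt0r_neq0 a_gt0, lt0r_neq0 g_gt0).
  by case: b xk yk => [] [] []; rewrite /coord_kernel /kappa1 /bernb /walsh /=; field;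
    rewrite g_neq0 p_neq0 a_neq0 a1_neq0.
have scale_gt0 : 0 < g * (1 - a) by rewrite mulr_gt0 // subr_gt0.
rewrite -(pmulr_lge0 _ scale_gt0) scaled.
by clear scaled; case: b xk yk => [] [] []; rewrite /bernb /=; nra.
Qed.

Lemma expansion_mixture (K : kernel R N) p g a mu :
  \sum_z mu z = 1 -> expansion K p g a mu ->
  forall x y, K x y = \sum_z mu z * prod_kernel (fun k => coord_kernel a p g (z k)) x y.
Proof.
move=> mu_sum1 eK x y; rewrite eK.
have kappa_set0 : kappa a mu set0 = 1.
  by rewrite kappaE -[RHS]mu_sum1; apply: eq_bigr => z _; rewrite big_set0 mulr1.
transitivity (bern p y * \sum_(A : {set 'I_N})
    kappa a mu A * \prod_(k in A) ((1 - (y k)%:R / p) * (1 - (x k)%:R / g))).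
  by rewrite [in RHS](bigD1 set0) //= big_set0 mulr1 kappa_set0.
under eq_bigr => A _ do rewrite kappaE big_distrl /=.
rewrite exchange_big /= bernE big_distrr /=; apply: eq_bigr => z _.
under [X in _ * X = _]eq_bigr => A _ do rewrite -mulrA -big_split /=.
rewrite -big_distrr /= sum_set_prod mulrCA -big_split /=; congr (_ * _).
by apply: eq_bigr => k _; rewrite /coord_kernel addrC.
Qed.

Lemma expansion_classG_conditions (K : kernel R N) p g a mu :
  distribution mu -> expansion K p g a mu ->
  0 < a -> a <= p -> a <= g -> p < 1 -> g < 1 -> 1 <= p + g ->
  [/\ stochastic K, maps_bern K p g & local_change K].
Proof.
move=> [mu_ge0 mu_sum1] eK a_gt0 le_ap le_ag p_lt1 g_lt1 pg_ge1.
have p_neq0 : p != 0 := lt0r_neq0 (lt_le_trans a_gt0 le_ap).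
have g_neq0 : g != 0 := lt0r_neq0 (lt_le_trans a_gt0 le_ag).
have K_mix := expansion_mixture mu_sum1 eK.
have coord_sum1 z k b : \sum_(c : bool) coord_kernel a p g (z k) b c = 1.
  exact: coord_kernel_sum1.
split.
- apply: (mixture_stochastic K_mix) => // z; apply: prod_kernel_stochastic => // k b c.
  exact: coord_kernel_ge0.
- apply: (mixture_maps_bern K_mix) => // z; apply: prod_kernel_maps_bern => k c.
  exact: coord_kernel_bern.
- by apply: (mixture_local K_mix) => z; apply: prod_kernel_local.
Qed.

Lemma reversible_local_expansions (K K' : kernel R N) p g :
  0 < p < 1 -> 0 < g < 1 -> stochastic K -> local_change K -> local_change K' ->
  (forall x y, bern g x * K x y = bern p y * K' y x) ->
  exists mu, distribution mu /\ expansion K p g p mu /\ expansion K' g p p mu.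
Proof.
move=> p01 g01 stK locK locK' revK; exists (K vert0).
have eK := reversible_expansion p01 g01 locK locK' revK stK.
split; first by split; [exact: stK.1 | exact: stK.2].
by split=> //; apply: expansion_swap revK eK.
Qed.

End Cube.

Unset Implicit Arguments.

Theorem proposition1 (R : realFieldType) (N : nat) (mdl : model R N) (phi gam : R) :
  0 < phi < 1 -> 0 < gam < 1 -> 1 <= phi + gam ->
  classG mdl phi gam <->
  (forall t : nat, (0 < t)%N ->
     exists mu : vert N -> R,
       distribution mu /\
       expansion (mdl phi gam t) phi gam (Num.min phi gam) mu /\
       expansion (mdl gam phi t) gam phi (Num.min phi gam) mu).
Proof.
move=> phi01 gam01 pg_ge1; split=> [classG_mdl t t_gt0 | expansions t t_gt0].
  have [[stK stK'] _ revK locK locK'] := classG_mdl t t_gt0.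
  have [le_pg | lt_gp] := lerP phi gam.
    exact: reversible_local_expansions.
  have revK' x y : bern phi x * mdl gam phi t x y = bern gam y * mdl phi gam t y x.
    by rewrite revK.
  have [mu [dmu [eK' eK]]] := reversible_local_expansions gam01 phi01 stK' locK' locK revK'.
  by exists mu.
have [mu [dmu [eK eK']]] := expansions t t_gt0.
have [phi_gt0 phi_lt1] := andP phi01; have [gam_gt0 gam_lt1] := andP gam01.
have min_gt0 : 0 < Num.min phi gam by rewrite lt_min phi_gt0.
have le_min_phi : Num.min phi gam <= phi by rewrite ge_min lexx.
have le_min_gam : Num.min phi gam <= gam by rewrite ge_min lexx orbT.
have [stK mbK locK] := expansion_classG_conditions dmu eK min_gt0 le_min_phi le_min_gam
  phi_lt1 gam_lt1 pg_ge1.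
have gp_ge1 : 1 <= gam + phi by rewrite addrC.
have [stK' _ locK'] := expansion_classG_conditions dmu eK' min_gt0 le_min_gam le_min_phi
  gam_lt1 phi_lt1 gp_ge1.
by split=> //; apply: expansion_rev eK eK'.
Qed.
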